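(* Let $Q\in\mathcal{P}$ have balance coefficient $\beta>\tfrac12$. Then for every $0<v<4(\beta-\tfrac12)$, $$D^*(v,Q)=\mathrm{KL}_2\!\left(\beta-\tfrac{v}{2},\,\beta\right).$$
   Context: Let $(\Omega,\mathcal{F},\mu)$ be a finite or $\sigma$-finite measure space, and let $\mathcal{P}$ be the set of probability measures on $(\Omega,\mathcal{F})$ absolutely continuous with respect to $\mu$. For $P,Q\in\mathcal{P}$ the lower-case letters $p,q$ denote their densities with respect to $\mu$. The Kullback–Leibler divergence is $D(P\Vert Q)=\int \ln\frac{dP}{dQ}\,dP$ if $P\ll Q$, and $+\infty$ otherwise. The total variation distance is $V(P,Q)=\int_\Omega|p-q|\,d\mu$. For $v>0$ define $D^*(v,Q)=\inf\{D(P\Vert Q): P\in\mathcal{P},\ V(P,Q)\ge v\}$, with $\inf\emptyset=+\infty$. For $p,q\in[0,1]$ let $\mathrm{KL}_2(p,q)=p\ln\frac{p}{q}+(1-p)\ln\frac{1-p}{1-q}$, with the conventions $0\ln(0/x)=0$ and $a\ln(a/0)=+\infty$ for $a>0$. The range of $Q$ is $\mathcal{R}(Q)=\{Q(A):A\in\mathcal{F}\}$. The balance coefficient of $Q$ is $\beta=\inf\{x\in\mathcal{R}(Q): x\ge\tfrac12\}$. *)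

From HB Require Import structures.
From mathcomp Require Import all_boot all_order all_algebra.
From mathcomp Require Import all_classical all_reals all_analysis.
Set Implicit Arguments. Unset Strict Implicit. Unset Printing Implicit Defensive.
Import Order.TTheory GRing.Theory Num.Theory.
Local Open Scope classical_set_scope.
Local Open Scope ring_scope.

Section Defs.
Context (d : measure_display) (T : measurableType d) (R : realType)
        (mu : {measure set T -> \bar R}).

(* p is the density (w.r.t. mu) of a probability measure P in the class 𝒫 *)
Definition is_density (p : T -> R) : Prop :=
  [/\ measurable_fun setT p, (forall x, 0 <= p x)
    & (\int[mu]_x (p x)%:E = 1)%E].

Definition prob_of (p : T -> R) (A : set T) : \bar R :=
  (\int[mu]_(x in A) (p x)%:E)%E.

Definition abs_cont (p q : T -> R) : Prop :=
  forall A, measurable A -> prob_of q A = 0%E -> prob_of p A = 0%E.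

(* Kullback-Leibler divergence D(P||Q) = \int ln (dP/dQ) dP
   = \int p ln (p/q) dmu when P << Q (dP/dQ = p/q Q-a.e.), +oo otherwise. *)
Definition KL (p q : T -> R) : \bar R :=
  if `[< abs_cont p q >] then (\int[mu]_x (p x * ln (p x / q x))%:E)%E
  else +oo%E.

Definition Vdist (p q : T -> R) : \bar R :=
  (\int[mu]_x (`|p x - q x|)%:E)%E.

(* D^*(v,Q) = inf { D(P||Q) : P in 𝒫, V(P,Q) >= v } (inf of empty = +oo) *)
Definition Dstar (v : R) (q : T -> R) : \bar R :=
  ereal_inf [set e | exists p, [/\ is_density p, (v%:E <= Vdist p q)%E
                                 & KL p q = e]].

Definition rangeQ (q : T -> R) : set R :=
  [set x | exists A, measurable A /\ prob_of q A = x%:E].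

Definition balance (q : T -> R) : R :=
  inf [set x | rangeQ q x /\ 1 / 2 <= x].

End Defs.

Definition klterm {R : realType} (a b : R) : \bar R :=
  if a == 0 then 0%E else if b == 0 then +oo%E else (a * ln (a / b))%:E.

Definition KL2 {R : realType} (p q : R) : \bar R :=
  (klterm p q + klterm (1 - p) (1 - q))%E.

From HB Require Import structures.
From mathcomp Require Import all_boot all_order all_algebra.
From mathcomp Require Import all_classical all_reals all_analysis.
From mathcomp Require Import ring lra measurable_realfun.
Set Implicit Arguments. Unset Strict Implicit. Unset Printing Implicit Defensive.
Import Order.TTheory GRing.Theory Num.Theory numFieldNormedType.Exports.
Local Open Scope classical_set_scope.
Local Open Scope ring_scope.

(* Write s = v / 2 and b for the balance coefficient of Q.

   Upper bound: if Q(A) = y with b <= y < 1, rescaling q by (y - s) / y on A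
   and by (1 - y + s) / (1 - y) off A gives a density P with V(P,Q) = 2s and
   D(P||Q) = KL_2(y - s, y).  The range of Q meets [b, b + e) for every e > 0,
   and KL_2(y - s, y) is continuous in y at b.

   Lower bound: let P << Q and S = {q < p}, so that V(P,Q) = 2 (P(S) - Q(S)).
   The pointwise Fenchel inequality x ln (x / y) >= (ln A + 1) x - A y, used
   with A on S and B off S, bounds D(P||Q) below by an expression affine in
   (P(S), Q(S)).  Since Q(S) is in the range of Q, either Q(S) <= 1 - b or
   Q(S) >= b.  Choosing A, B optimal at the corner (1 - b + s, 1 - b), resp.
   (b + t, b) for t < s, the affine bound is smallest at that corner, where it
   equals KL_2(1 - b + s, 1 - b) = KL_2(b - s, b), resp. KL_2(b + t, b), which
   dominates KL_2(b - t, b) because b >= 1/2; then let t tend to s.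

   When b = 1 the range of Q lies in {0, 1}, so Q(S) = 0 and no P << Q has
   V(P,Q) > 0. *)

Section real_analysis.
Variable R : realType.
Implicit Types (f : R -> R) (a b c s t x y : R).

Lemma is_derive_ge0_le f df a b : a <= b ->
  (forall x, a <= x <= b -> is_derive x 1 f (df x)) ->
  (forall x, a < x < b -> 0 <= df x) -> f a <= f b.
Proof.
move=> ab fd df0; rewrite -subr_ge0.
have [->|altb] := eqVneq a b; first by rewrite subrr.
have {altb}ab : a < b by rewrite lt_neqAle altb.
have [c /[!in_itv]/= /andP[ac cb] ->] : exists2 c, c \in `]a, b[ & f b - f a = df c * (b - a).
  apply: MVT => // [x /[!in_itv]/= /andP[ax xb]|]; first by apply: fd; rewrite !ltW.
  rewrite continuous_subspace_in => x xab.
  apply: continuous_subspaceT_for; first by rewrite inE in xab.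
  move: xab; rewrite inE /= in_itv /= => /fd [].
  by move/derivable1_diffP/differentiable_continuous.
by rewrite mulr_ge0 ?df0 ?ac // subr_ge0 ltW.
Qed.

Lemma is_derive_ln_comp f df x : is_derive x 1 f df -> 0 < f x ->
  is_derive x 1 (fun t => ln (f t)) (df / f x).
Proof.
by move=> fd fx0; rewrite mulrC; apply: is_derive1_comp (is_derive1_ln fx0) fd.
Qed.

Lemma is_derive_mul_ln_comp f df x : is_derive x 1 f df -> 0 < f x ->
  is_derive x 1 (fun t => f t * ln (f t)) (df * (ln (f x) + 1)).
Proof.
move=> fd fx0; apply: is_derive_eq; first exact: is_deriveM fd (is_derive_ln_comp fd fx0).
by rewrite /GRing.scale /= mulrCA divff ?gt_eqF // mulr1 mulrDr mulr1 addrC mulrC.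
Qed.

Lemma is_derive_addl a x : is_derive x 1 (fun t => a + t) 1.
Proof. by have := is_deriveD (is_derive_cst a x 1) (is_derive_id x 1); rewrite add0r. Qed.

Lemma is_derive_subl a x : is_derive x 1 (fun t => a - t) (-1).
Proof. by have := is_deriveB (is_derive_cst a x 1) (is_derive_id x 1); rewrite sub0r. Qed.

Lemma is_derive_ln_shift_gap a c t : a != 0 -> c != 0 -> 0 < a + t -> 0 < c - t ->
  is_derive t 1 (fun u => ln (a + u) - ln (c - u) - (a^-1 + c^-1) * u)
    (t * (a + c) * (t - (c - a)) / (a * c * ((a + t) * (c - t)))).
Proof.
move=> a0 c0 at0 ct0; apply: is_derive_eq.
  exact: is_deriveB (is_deriveB (is_derive_ln_comp (is_derive_addl a t) at0)
    (is_derive_ln_comp (is_derive_subl c t) ct0)) (is_deriveZ _ (is_derive_id t 1)).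
rewrite /GRing.scale /=; field.
by rewrite a0 c0 !gt_eqF.
Qed.

Lemma ln_shift_le_tangent a c t : 0 < a -> 0 <= t -> t <= c - a ->
  ln ((a + t) / a) - ln ((c - t) / c) <= t / a + t / c.
Proof.
move=> a0 t0 tca; have c0 : 0 < c by lra.
pose h u := ln (a + u) - ln (c - u) - (a^-1 + c^-1) * u.
have : - h 0 <= - h t.
  apply: (@is_derive_ge0_le (fun u => - h u) (fun u =>
    - (u * (a + c) * (u - (c - a)) / (a * c * ((a + u) * (c - u))))) _ _ t0).
    move=> u /andP[u0 ut]; apply: is_deriveN.
    by apply: is_derive_ln_shift_gap; rewrite ?gt_eqF //; lra.
  move=> u /andP[u0 ut]; rewrite oppr_ge0; apply: mulr_le0_ge0.
    by apply: mulr_ge0_le0; [apply: mulr_ge0|]; lra.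
  by rewrite invr_ge0 !mulr_ge0 //; lra.
rewrite /h !ln_div ?posrE //; try lra.
rewrite addr0 subr0 mulr0 subr0 mulrDl ![_^-1 * t]mulrC; lra.
Qed.

Lemma tangent_le_ln_shift a c t : 0 < c <= a -> 0 <= t < c ->
  t / a + t / c <= ln ((a + t) / a) - ln ((c - t) / c).
Proof.
move=> /andP[c0 ca] /andP[t0 tc]; have a0 : 0 < a by lra.
pose h u := ln (a + u) - ln (c - u) - (a^-1 + c^-1) * u.
have : h 0 <= h t.
  apply: (@is_derive_ge0_le h (fun u =>
    u * (a + c) * (u - (c - a)) / (a * c * ((a + u) * (c - u)))) _ _ t0).
    by move=> u /andP[u0 ut]; apply: is_derive_ln_shift_gap; rewrite ?gt_eqF //; lra.
  move=> u /andP[u0 ut]; apply: mulr_ge0; first by apply: mulr_ge0; [apply: mulr_ge0|]; lra.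
  by rewrite invr_ge0 !mulr_ge0 //; lra.
rewrite /h !ln_div ?posrE //; try lra.
rewrite addr0 subr0 mulr0 subr0 mulrDl ![_^-1 * t]mulrC; lra.
Qed.

Lemma le_left_continuous f s (K : \bar R) : 0 < s ->
  {for s, continuous f} -> (forall t, 0 <= t < s -> ((f t)%:E <= K)%E) -> ((f s)%:E <= K)%E.
Proof.
move=> s0 cf fK; case: K fK => [k| |] fK; last 2 first.
- by rewrite leey.
- by have := fK 0; rewrite lexx s0 leeNy_eq => /(_ isT).
rewrite lee_fin.
apply: (closed_cvg _ (@closed_le _ k) _ _ (cvg_at_left_filter cf)).
near=> t; rewrite /= -lee_fin; apply: fK; apply/andP; split; near: t.
  exact: nbhs_left_ge.
exact: nbhs_left_lt.
Unshelve. all: by end_near.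
Qed.
End real_analysis.

Section binary_kl.
Variable R : realType.
Implicit Types (f g : R -> R) (A B b s t x y : R).

Definition kl2r x y := x * ln (x / y) + (1 - x) * ln ((1 - x) / (1 - y)).

(* Fenchel dual of [kl2r]: its supremum over A, B > 0 is [kl2r x y], attained
   at A = x / y and B = (1 - x) / (1 - y). *)
Definition kl2r_dual A B x y :=
  (ln A + 1) * x - A * y + ((ln B + 1) * (1 - x) - B * (1 - y)).

Lemma kl2rC x y : kl2r (1 - x) (1 - y) = kl2r x y.
Proof. by rewrite /kl2r !subKr addrC. Qed.

Lemma KL2_kl2r x y : 0 < x < 1 -> 0 < y < 1 -> KL2 x y = (kl2r x y)%:E.
Proof.
move=> /andP[x0 x1] /andP[y0 y1].
by rewrite /KL2 /klterm !gt_eqF ?subr_gt0.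
Qed.

Lemma KL2_1 x : x < 1 -> KL2 x 1 = +oo%E.
Proof.
move=> x1; have x0 : (1 - x == 0) = false by rewrite gt_eqF // subr_gt0.
rewrite /KL2 /klterm subrr eqxx x0 oner_eq0.
by case: ifP => _; rewrite ?add0e ?addey.
Qed.

Lemma kl2r_sub_le_add b t : 1 / 2 <= b -> 0 <= t < 1 - b ->
  kl2r (b - t) b <= kl2r (b + t) b.
Proof.
move=> b2 /andP[t0 tb]; set c := 1 - b in tb *.
have b0 : 0 < b by lra.
have c0 : 0 < c by lra.
have cb : c <= b by rewrite /c; lra.
pose g u := (b + u) * ln (b + u) + (c - u) * ln (c - u)
  - ((b - u) * ln (b - u) + (c + u) * ln (c + u)) + (2 * (ln c - ln b)) * u.
have : g 0 <= g t.
  apply: (@is_derive_ge0_le _ g (fun u => ln ((b + u) * (b - u) * (c * c))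
    - ln ((c - u) * (c + u) * (b * b))) _ _ t0).
    move=> u /andP[u0 ut].
    have bu : 0 < b + u by lra.
    have cu : 0 < c - u by lra.
    have bu' : 0 < b - u by lra.
    have cu' : 0 < c + u by lra.
    apply: is_derive_eq.
      exact: is_deriveD (is_deriveB (is_deriveD
        (is_derive_mul_ln_comp (is_derive_addl b u) bu)
        (is_derive_mul_ln_comp (is_derive_subl c u) cu)) (is_deriveD
        (is_derive_mul_ln_comp (is_derive_subl b u) bu')
        (is_derive_mul_ln_comp (is_derive_addl c u) cu')))
        (is_deriveZ _ (is_derive_id u 1)).
    by rewrite /= /GRing.scale /= mulr1 !lnM ?posrE ?mulr_gt0 //; ring.
  move=> u /andP[u0 ut].
  rewrite subr_ge0 ler_ln ?posrE ?mulr_gt0 //; try lra.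
  rewrite (_ : _ * (b * b) = c * c * (b * b) - u * u * (b * b)); last by ring.
  rewrite (_ : _ * (c * c) = c * c * (b * b) - u * u * (c * c)); last by ring.
  rewrite lerD2l lerN2 ler_pM2l ?mulr_gt0 //.
  by apply: ler_pM => //; exact: ltW.
move=> g0t; rewrite -subr_ge0.
have -> : kl2r (b + t) b - kl2r (b - t) b = g t - g 0.
  have e1 : 1 - (b + t) = c - t by rewrite /c; ring.
  have e2 : 1 - (b - t) = c + t by rewrite /c; ring.
  rewrite /g /kl2r e1 e2 -/c !ln_div ?posrE //; try lra.
  by rewrite !addr0 !subr0; ring.
by rewrite subr_ge0.
Qed.

Lemma continuous_mul_ln_div f g t : {for t, continuous f} -> {for t, continuous g} ->
  0 < f t -> 0 < g t -> {for t, continuous (fun u => f u * ln (f u / g u))}.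
Proof.
move=> cf cg ft0 gt0; apply: cvgM => //; apply: continuous_comp.
  by apply: cvgM => //; apply: cvgV => //; rewrite gt_eqF.
by apply: continuous_ln; rewrite divr_gt0.
Qed.

Lemma continuous_kl2r f g t : {for t, continuous f} -> {for t, continuous g} ->
  0 < f t < 1 -> 0 < g t < 1 -> {for t, continuous (fun u => kl2r (f u) (g u))}.
Proof.
move=> cf cg /andP[f0 f1] /andP[g0 g1].
have c1 (h : R -> R) : {for t, continuous h} -> {for t, continuous (fun u => 1 - h u)}.
  by move=> ch; apply: cvgB => //; exact: cvg_cst.
rewrite /kl2r; apply: cvgD; first exact: continuous_mul_ln_div.
by apply: (continuous_mul_ln_div (c1 _ cf) (c1 _ cg)); rewrite subr_gt0.
Qed.

Lemma le_mul_ln_div A x y : 0 < A -> 0 <= x -> 0 < y ->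
  (ln A + 1) * x - A * y <= x * ln (x / y).
Proof.
move=> A0 x0 y0; have [->|xn0] := eqVneq x 0.
  by rewrite mulr0 mul0r add0r oppr_le0 ltW // mulr_gt0.
have {}x0 : 0 < x by rewrite lt_def xn0 x0.
set z := A * y / x.
have z0 : 0 < z by rewrite !mulr_gt0 ?invr_gt0.
have lnz : ln z <= z - 1.
  by have := @le_ln1Dx _ (z - 1); rewrite (addrC 1) subrK; apply; lra.
have -> : x * ln (x / y) = x * ln A - x * ln z.
  rewrite -mulrBr -ln_div ?posrE // /z; congr (_ * ln _).
  by field; rewrite !gt_eqF.
have : x * ln z <= x * (z - 1) by apply: ler_wpM2l => //; exact: ltW.
rewrite mulrBr mulr1 /z mulrCA divff ?gt_eqF // mulr1; lra.
Qed.

Lemma kl2r_le_dual x0 y0 x y : 0 < y0 <= x0 -> x0 < 1 -> x0 - y0 <= x - y ->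
  0 <= (ln (x0 / y0) - ln ((1 - x0) / (1 - y0))
         - ((x0 - y0) / y0 + (x0 - y0) / (1 - y0))) * (y - y0) ->
  kl2r x0 y0 <= kl2r_dual (x0 / y0) ((1 - x0) / (1 - y0)) x y.
Proof.
(* With the constants optimal for (x0, y0), the dual is affine in (x, y) and
   touches [kl2r] at (x0, y0). *)
move=> /andP[y00 yx] x01 xy sgn; have y01 : y0 < 1 by lra.
set A := x0 / y0 in sgn *; set B := (1 - x0) / (1 - y0) in sgn *.
have D0 : 0 <= ln A - ln B.
  rewrite subr_ge0 (@le_trans _ _ 0) // ?ln_ge0 ?ln_le0 //.
    by rewrite ler_pdivrMr ?subr_gt0 // mul1r; lra.
  by rewrite ler_pdivlMr // mul1r.
have -> : kl2r_dual A B x y = kl2r x0 y0 + (ln A - ln B) * ((x - y) - (x0 - y0))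
    + (ln A - ln B - ((x0 - y0) / y0 + (x0 - y0) / (1 - y0))) * (y - y0).
  by rewrite /kl2r_dual /kl2r /A /B; field; rewrite !gt_eqF ?subr_gt0.
by rewrite -addrA lerDl addr_ge0 // mulr_ge0 // subr_ge0.
Qed.

Lemma kl2r_le_dual_below x0 y0 x y : 0 < y0 <= x0 -> x0 <= 1 - y0 -> y <= y0 ->
  x0 - y0 <= x - y -> kl2r x0 y0 <= kl2r_dual (x0 / y0) ((1 - x0) / (1 - y0)) x y.
Proof.
move=> /andP[y00 yx] x1 yy xy; apply: kl2r_le_dual; rewrite ?y00 ?yx //; try lra.
apply: mulr_le0; last by rewrite subr_le0.
rewrite subr_le0; set t := x0 - y0.
have -> : x0 = y0 + t by rewrite /t addrC subrK.
rewrite (_ : 1 - (y0 + t) = 1 - y0 - t); last by ring.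
by apply: ln_shift_le_tangent; rewrite /t; lra.
Qed.

Lemma kl2r_le_dual_above x0 y0 x y : 1 / 2 <= y0 <= x0 -> x0 < 1 -> y0 <= y ->
  x0 - y0 <= x - y -> kl2r x0 y0 <= kl2r_dual (x0 / y0) ((1 - x0) / (1 - y0)) x y.
Proof.
move=> /andP[y2 yx] x1 yy xy; apply: kl2r_le_dual => //; first (apply/andP; split; lra).
apply: mulr_ge0; last by rewrite subr_ge0.
rewrite subr_ge0; set t := x0 - y0.
have -> : x0 = y0 + t by rewrite /t addrC subrK.
rewrite (_ : 1 - (y0 + t) = 1 - y0 - t); last by ring.
by apply: tangent_le_ln_shift; apply/andP; split; rewrite /t; lra.
Qed.
End binary_kl.

Section densities.
Context d (T : measurableType d) (R : realType) (mu : {measure set T -> \bar R}).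
Implicit Types (p q : T -> R) (A S : set T).

Lemma measurable_ltr_set p q : measurable_fun setT p -> measurable_fun setT q ->
  measurable [set x | p x < q x].
Proof.
move=> mp mq.
rewrite (_ : [set x | _] = setT `&` (fun x => p x < q x) @^-1` [set true]).
  by apply: (measurable_fun_ltr mp mq measurableT).
by apply/seteqP; split => x /=; [move=> h; split|case].
Qed.

Lemma measurable_fun_if_mem A (c1 c2 : R) : measurable A ->
  measurable_fun setT (fun x => if x \in A then c1 else c2).
Proof.
move=> mA; rewrite (_ : (fun x => _) = (fun x => c2 + (c1 - c2) * \1_A x)).
  by apply: measurable_funD => //; apply: measurable_funM => //; exact: measurable_indic.
by apply/funext => x; rewrite indicE; case: (x \in A) => /=; ring.
Qed.

Lemma measurable_mul_ln_div p q : measurable_fun setT p -> measurable_fun setT q ->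
  (forall x, 0 <= p x) -> (forall x, 0 <= q x) ->
  measurable_fun setT (fun x => p x * ln (p x / q x)).
Proof.
move=> mp mq p0 q0.
(* Avoid the quotient: on {q = 0} the integrand vanishes because x / 0 = 0
   and ln 0 = 0. *)
rewrite (_ : (fun x => _) = (fun x => if 0 < q x then p x * (ln (p x) - ln (q x)) else 0)).
  apply: measurable_fun_ifT; first exact: measurable_fun_ltr.
    by apply: measurable_funM => //; apply: measurable_funB; exact: measurableT_comp.
  exact: measurable_cst.
apply/funext => x; case: ifPn => [qx0|].
  have [->|px0] := eqVneq (p x) 0; first by rewrite !mul0r.
  by rewrite ln_div ?posrE // lt_def px0 p0.
rewrite -leNgt => qx0; have -> : q x = 0 by apply/eqP; rewrite eq_le qx0 q0.
by rewrite invr0 mulr0 ln0 // mulr0.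
Qed.

Lemma density_integrable q : is_density mu q -> mu.-integrable setT (EFin \o q).
Proof.
move=> [mq q0 q1]; apply/integrableP; split; first exact/measurable_EFinP.
rewrite (eq_integral (fun x => (q x)%:E)) ?q1 ?ltry // => x _.
by rewrite /= ger0_norm.
Qed.

Local Open Scope ereal_scope.

Lemma prob_of_ge0 q A : is_density mu q -> 0 <= prob_of mu q A.
Proof. by move=> [_ q0 _]; apply: integral_ge0 => x _; rewrite lee_fin. Qed.

Lemma prob_of_setCD q A : is_density mu q -> measurable A ->
  prob_of mu q A + prob_of mu q (~` A) = 1.
Proof.
move=> [mq _ q1] mA; rewrite /prob_of -q1 -integral_setU ?setUv //.
- exact: measurableC.
- exact/measurable_EFinP.
- by rewrite disj_set2E setICr.
Qed.

Lemma prob_of_real q A : is_density mu q -> measurable A ->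
  exists r : R, prob_of mu q A = r%:E /\ (0 <= r <= 1)%R.
Proof.
move=> hq mA; move: (prob_of_setCD hq mA) (prob_of_ge0 A hq) (prob_of_ge0 (~` A) hq).
case: (prob_of mu q A) => [r| |] //; case: (prob_of mu q (~` A)) => [r'| |] //=.
by rewrite !lee_fin -EFinD => -[rr'] r0 r'0; exists r; split => //; lra.
Qed.

Lemma prob_of_setC q A (r : R) : is_density mu q -> measurable A ->
  prob_of mu q A = r%:E -> prob_of mu q (~` A) = (1 - r)%:E.
Proof.
move=> hq mA qA; have := prob_of_setCD hq mA; rewrite qA.
by case: (prob_of mu q (~` A)) => [r'| |] //= -[<-]; congr EFin; ring.
Qed.

Lemma abs_cont_le_scale p q (k : R) : is_density mu p -> is_density mu q ->
  (forall x, p x <= k * q x)%R -> abs_cont mu p q.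
Proof.
move=> hp hq pk B mB qB; have [mp p0 _] := hp; have [mq q0 _] := hq.
apply/eqP; rewrite eq_le prob_of_ge0 // andbT -(mule0 k%:E) -qB.
rewrite -integralZl //; last exact: integrableS (density_integrable hq).
apply: ge0_le_integral => //.
- by move=> x _; rewrite lee_fin.
- by apply/measurable_EFinP; exact: measurable_funS mp.
- by apply/measurable_EFinP/measurable_funM => //; exact: measurable_funS mq.
- by move=> x _; rewrite -EFinM lee_fin.
Qed.

Lemma integral_mul_if (h : T -> R) A (c1 c2 : R) :
  mu.-integrable setT (EFin \o h) -> measurable A ->
  \int[mu]_x (h x * (if x \in A then c1 else c2))%:E =
  c1%:E * \int[mu]_(x in A) (h x)%:E + c2%:E * \int[mu]_(x in ~` A) (h x)%:E.
Proof.
move=> ih mA; have mCA : measurable (~` A) by exact: measurableC.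
have mh : measurable_fun setT h by move/integrableP: ih => [/measurable_EFinP].
rewrite -[in LHS](setUv A) integral_setU //; last 2 first.
- rewrite setUv; apply/measurable_EFinP/measurable_funM => //.
  exact: measurable_fun_if_mem.
- by rewrite disj_set2E setICr.
rewrite -!integralZl //; try exact: integrableS ih.
congr (_ + _); apply: eq_integral => x /[!inE] xA.
  by rewrite mem_set // mulrC EFinM.
by rewrite memNset // mulrC EFinM.
Qed.

Lemma integrable_mul_if (h : T -> R) A (c1 c2 : R) :
  mu.-integrable setT (EFin \o h) -> measurable A ->
  mu.-integrable setT (EFin \o (fun x => h x * (if x \in A then c1 else c2))%R).
Proof.
move=> ih mA; have mh : measurable_fun setT h by move/integrableP: ih => [/measurable_EFinP].
apply: (le_integrable measurableT _ _ (integrableZl measurableT (`|c1| + `|c2|)%R ih)).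
  by apply/measurable_EFinP/measurable_funM => //; exact: measurable_fun_if_mem.
move=> x _ /=; rewrite lee_fin !normrM mulrC ler_wpM2r //.
by rewrite [X in (_ <= X)%R]ger0_norm ?addr_ge0 //; case: (x \in A); rewrite ?lerDl ?lerDr.
Qed.

Lemma integral_mul_if2 (h1 h2 : T -> R) A (a1 a2 b1 b2 : R) :
  mu.-integrable setT (EFin \o h1) -> mu.-integrable setT (EFin \o h2) -> measurable A ->
  \int[mu]_x (h1 x * (if x \in A then a1 else a2)
               + h2 x * (if x \in A then b1 else b2))%:E =
  a1%:E * \int[mu]_(x in A) (h1 x)%:E + a2%:E * \int[mu]_(x in ~` A) (h1 x)%:E +
  (b1%:E * \int[mu]_(x in A) (h2 x)%:E + b2%:E * \int[mu]_(x in ~` A) (h2 x)%:E).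
Proof.
move=> i1 i2 mA; rewrite -!integral_mul_if // -integralD_EFin //.
all: exact: integrable_mul_if.
Qed.

(* Unlike [le_integral], no integrability is required. *)
Lemma le_integral_measurable (D : set T) (f g : T -> R) : measurable D ->
  measurable_fun D f -> measurable_fun D g -> (forall x, D x -> g x <= f x)%R ->
  \int[mu]_(x in D) (g x)%:E <= \int[mu]_(x in D) (f x)%:E.
Proof.
move=> mD /measurable_EFinP mf /measurable_EFinP mg gf.
have fg : {in D, forall x, (g x)%:E <= (f x)%:E} by move=> x /[!inE] Dx; rewrite lee_fin gf.
rewrite integralE [leRHS]integralE; apply: leeB.
  apply: ge0_le_integral => //; [exact: measurable_funepos|exact: measurable_funepos|].
  by move=> x Dx; apply: (funepos_le fg); rewrite inE.
apply: ge0_le_integral => //; [exact: measurable_funeneg|exact: measurable_funeneg|].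
by move=> x Dx; apply: (funeneg_le fg); rewrite inE.
Qed.

Lemma integral_support p q (phi : T -> R) (C : R) :
  is_density mu p -> is_density mu q -> abs_cont mu p q ->
  measurable_fun setT phi -> (0 <= C)%R ->
  (forall x, q x <= 0 -> `|phi x| <= C * p x)%R ->
  \int[mu]_x (phi x)%:E = \int[mu]_(x in [set x | (0 < q x)%R]) (phi x)%:E.
Proof.
move=> [mp p0 _] [mq q0 _] hac mphi C0 bnd.
have mP : measurable [set x | (0 < q x)%R] by exact: measurable_ltr_set.
set Z := ~` [set x | (0 < q x)%R]; have mZ : measurable Z by exact: measurableC.
have ZE x : Z x -> q x = 0%R.
  by rewrite /Z /= => /negP; rewrite -leNgt => qx0; apply/eqP; rewrite eq_le qx0 q0.
have PZ : prob_of mu p Z = 0.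
  apply: hac => //; rewrite /prob_of (eq_integral (cst 0)) ?integral0 //.
  by move=> x /[!inE] /ZE ->.
have mphiZ : measurable_fun Z (EFin \o phi).
  by apply/measurable_EFinP; exact: measurable_funS mphi.
have phiZ : \int[mu]_(x in Z) (phi x)%:E = 0.
  apply/eqP; rewrite -abse_eq0 eq_le abse_ge0 andbT.
  apply: le_trans (le_abse_integral mu mZ mphiZ) _.
  apply: (@le_trans _ _ (\int[mu]_(x in Z) (C%:E * (p x)%:E))).
    apply: ge0_le_integral; first exact: mZ.
    - by move=> x _; exact: abse_ge0.
    - by apply: measurableT_comp => //; exact: abse_measurable.
    - by apply/measurable_EFinP/measurable_funM => //; exact: measurable_funS mp.
    - by move=> x /ZE qx0 /=; rewrite -EFinM lee_fin bnd // qx0.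
  rewrite ge0_integralZl_EFin //.
  - by rewrite -/(prob_of mu p Z) PZ mule0.
  - by move=> x _; rewrite lee_fin.
  - by apply/measurable_EFinP; exact: measurable_funS mp.
transitivity (\int[mu]_(x in [set x | (0 < q x)%R] `|` Z) (phi x)%:E).
  by rewrite setUv.
rewrite integral_setU // ?phiZ ?adde0 //.
  by rewrite setUv; exact/measurable_EFinP.
by rewrite disj_set2E setICr.
Qed.
End densities.

Section divergence_bounds.
Context d (T : measurableType d) (R : realType) (mu : {measure set T -> \bar R}).
Implicit Types (p q : T -> R) (A S : set T).
Local Open Scope ereal_scope.

Lemma two_level_density q A (b s : R) : is_density mu q -> measurable A ->
  prob_of mu q A = b%:E -> (0 < s < b)%R -> (b < 1)%R ->
  exists p, [/\ is_density mu p, Vdist mu p q = (2 * s)%:E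
              & KL mu p q = (kl2r (b - s) b)%:E].
Proof.
move=> hq mA qA /andP[s0 sb] b1; have [mq q0 _] := hq.
have qAC := prob_of_setC hq mA qA.
have iq := density_integrable hq.
have intE (c1 c2 : R) : \int[mu]_x (q x * (if x \in A then c1 else c2))%:E
    = (c1 * b + c2 * (1 - b))%:E.
  by rewrite integral_mul_if // -!/(prob_of _ _ _) qA qAC -!EFinM -EFinD.
set l := ((b - s) / b)%R; set k := ((1 - (b - s)) / (1 - b))%R.
have l0 : (0 < l)%R by rewrite divr_gt0 ?subr_gt0 //; lra.
have l1 : (l <= 1)%R by rewrite ler_pdivrMr ?mul1r; lra.
have k1 : (1 <= k)%R by rewrite ler_pdivlMr ?mul1r ?subr_gt0; lra.
pose p x := (q x * (if x \in A then l else k))%R.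
have p0 x : (0 <= p x)%R by rewrite mulr_ge0 //; case: ifP; lra.
have hp : is_density mu p.
  split => //; first by apply: measurable_funM => //; exact: measurable_fun_if_mem.
  by rewrite intE /l /k; congr EFin; field; rewrite !gt_eqF ?subr_gt0 //; lra.
have hac : abs_cont mu p q.
  apply: (abs_cont_le_scale (k := k) hp hq) => x.
  by rewrite /p mulrC; apply: ler_wpM2r => //; case: ifP; lra.
exists p; split => //.
  rewrite /Vdist (eq_integral (fun x => (q x * (if x \in A then 1 - l else k - 1))%:E)).
    by rewrite intE /l /k; congr EFin; field; rewrite !gt_eqF ?subr_gt0 //; lra.
  move=> x _; congr EFin; rewrite /p -[X in (_ - X)%R]mulr1 -mulrBr normrM ger0_norm //.
  by case: ifP => _; [rewrite ler0_norm ?opprB // | rewrite ger0_norm //]; lra.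
rewrite /KL asboolT // (eq_integral (fun x => (q x * (if x \in A then l * ln l else k * ln k))%:E)).
  by rewrite intE /kl2r /l /k; congr EFin; field; rewrite !gt_eqF ?subr_gt0 //; lra.
move=> x _; congr EFin; rewrite /p.
have [->|qx0] := eqVneq (q x) 0%R; first by rewrite !mul0r.
case: ifP => _; rewrite [(q x * _ / _)%R]mulrAC divff // mul1r.
all: exact/esym/mulrA.
Qed.

Definition scheffe_set p q : set T := [set z | (q z < p z)%R].

Lemma Vdist_scheffe p q (x y : R) : is_density mu p -> is_density mu q ->
  prob_of mu p (scheffe_set p q) = x%:E -> prob_of mu q (scheffe_set p q) = y%:E ->
  Vdist mu p q = (2 * (x - y))%:E.
Proof.
move=> hp hq pS qS; have [mp _ _] := hp; have [mq _ _] := hq.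
set S := scheffe_set p q in pS qS *.
have mS : measurable S by exact: measurable_ltr_set.
rewrite /Vdist (eq_integral (fun z =>
  (p z * (if z \in S then 1 else -1) + q z * (if z \in S then -1 else 1))%:E)).
  rewrite integral_mul_if2 //; try exact: density_integrable.
  rewrite -!/(prob_of _ _ _) pS qS (prob_of_setC hp mS pS) (prob_of_setC hq mS qS).
  by rewrite -!EFinM -!EFinD; congr EFin; ring.
move=> z _; congr EFin; case: ifPn => [/set_mem /= qp|/negP zS].
  by rewrite gtr0_norm ?subr_gt0 //; ring.
have pq : (p z <= q z)%R by rewrite leNgt; apply/negP => qp; apply: zS; exact: mem_set.
by rewrite ler0_norm ?subr_le0 //; ring.
Qed.

Lemma kl2r_dual_le_KL p q S (x y A B : R) : is_density mu p -> is_density mu q ->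
  abs_cont mu p q -> measurable S -> prob_of mu p S = x%:E -> prob_of mu q S = y%:E ->
  (0 < A)%R -> (0 < B)%R -> (kl2r_dual A B x y)%:E <= KL mu p q.
Proof.
move=> hp hq hac mS pS qS A0 B0; have [mp p0 _] := hp; have [mq q0 _] := hq.
pose g z := (p z * (if z \in S then ln A + 1 else ln B + 1)
             + q z * (if z \in S then - A else - B))%R.
have mg : measurable_fun setT g.
  by apply: measurable_funD; apply: measurable_funM => //; exact: measurable_fun_if_mem.
have mf := measurable_mul_ln_div mp mq p0 q0.
have -> : (kl2r_dual A B x y)%:E = \int[mu]_z (g z)%:E.
  rewrite integral_mul_if2 //; try exact: density_integrable.
  rewrite -!/(prob_of _ _ _) pS qS (prob_of_setC hp mS pS) (prob_of_setC hq mS qS).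
  by rewrite -!EFinM -!EFinD; congr EFin; rewrite /kl2r_dual; ring.
rewrite /KL asboolT // (integral_support (C := `|ln A + 1| + `|ln B + 1|)%R hp hq hac) //.
  rewrite [leRHS](integral_support (C := 0%R) hp hq hac) //.
    apply: le_integral_measurable => //; first exact: measurable_ltr_set.
    - exact: measurable_funS mf.
    - exact: measurable_funS mg.
    move=> z /= qz; rewrite /g.
    by case: ifP => _; rewrite mulrN [(p z * _)%R]mulrC [(q z * _)%R]mulrC le_mul_ln_div.
  move=> z qz; have -> : q z = 0%R by apply/eqP; rewrite eq_le qz q0.
  by rewrite invr0 mulr0 ln0 // mulr0 normr0 mul0r.
move=> z qz; rewrite /g; have -> : q z = 0%R by apply/eqP; rewrite eq_le qz q0.
rewrite mul0r addr0 normrM ger0_norm // mulrC ler_wpM2r //.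
by case: ifP => _; rewrite ?lerDl ?lerDr.
Qed.
End divergence_bounds.

Section balance.
Context d (T : measurableType d) (R : realType) (mu : {measure set T -> \bar R}).
Variable q : T -> R.
Hypothesis hq : is_density mu q.

Lemma rangeQ_setC x : rangeQ mu q x -> rangeQ mu q (1 - x).
Proof. by move=> [A [mA qA]]; exists (~` A); split; [exact: measurableC|exact: prob_of_setC]. Qed.

Lemma rangeQ1 : rangeQ mu q 1.
Proof. by exists setT; split => //; case: hq. Qed.

Let balance_set := [set x | rangeQ mu q x /\ 1 / 2 <= x].

Let balance_set_lbound : has_lbound balance_set.
Proof. by exists (1 / 2) => x []. Qed.

Lemma balance_le x : rangeQ mu q x -> 1 / 2 <= x -> balance mu q <= x.
Proof. by move=> qx x2; exact: (ge_inf balance_set_lbound (conj qx x2)). Qed.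

Lemma balance_le1 : balance mu q <= 1.
Proof. by apply: balance_le rangeQ1 _; lra. Qed.

Lemma rangeQ_balance x : rangeQ mu q x -> balance mu q <= x \/ x <= 1 - balance mu q.
Proof.
move=> qx; have [x2|x2] := lerP (1 / 2) x; first by left; exact: balance_le.
by right; have := balance_le (rangeQ_setC qx) (_ : 1 / 2 <= 1 - x); lra.
Qed.

Lemma rangeQ_near_balance e : 0 < e ->
  exists x, [/\ rangeQ mu q x, balance mu q <= x & x < balance mu q + e].
Proof.
move=> e0; have : inf balance_set < balance mu q + e by rewrite ltrDl.
move=> /(inf_lt (ex_intro _ 1 (conj rangeQ1 _))) [|x [qx x2] xe]; first lra.
by exists x; split => //; exact: balance_le.
Qed.
End balance.

Section Dstar_bounds.
Context d (T : measurableType d) (R : realType) (mu : {measure set T -> \bar R}).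
Variable q : T -> R.
Hypothesis hq : is_density mu q.
Local Notation b := (balance mu q).

Lemma Dstar_le_kl2r v : 0 < v -> v / 2 < b < 1 ->
  (Dstar mu v q <= (kl2r (b - v / 2) b)%:E)%E.
Proof.
move=> v0 /andP[sb b1]; set s := v / 2 in sb *; have s0 : 0 < s by rewrite divr_gt0.
have Dy y : rangeQ mu q y -> b <= y < 1 -> (Dstar mu v q <= (kl2r (y - s) y)%:E)%E.
  move=> [A [mA qA]] /andP[yb y1].
  have sy : 0 < s < y by apply/andP; split; lra.
  have [p [hp hV hK]] := two_level_density hq mA qA sy y1.
  by apply: ereal_inf_lbound; exists p; split => //; rewrite hV /s mulrC divfK.
have ck : {for b, continuous (fun y => kl2r (y - s) y)}.
  apply: continuous_kl2r; [apply: cvgB; [exact: cvg_id|exact: cvg_cst]|exact: cvg_id| |].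
  1,2: by apply/andP; split; lra.
apply/lee_addgt0Pr => e e0.
have /cvgrPdist_lt/(_ e e0)/nbhs_normP[δ /= δ0 hδ] := ck.
have m0 : 0 < Num.min δ (1 - b) by rewrite lt_min δ0 subr_gt0.
have [y [qy yb ym]] := rangeQ_near_balance hq m0.
have /andP[mδ m1] : (Num.min δ (1 - b) <= δ) && (Num.min δ (1 - b) <= 1 - b).
  by rewrite -le_min.
apply: le_trans (Dy y qy _) _; first by apply/andP; split; lra.
rewrite -EFinD lee_fin -lerBlDl; apply: le_trans (ler_norm _) _; rewrite distrC ltW //.
by apply: hδ; rewrite /ball_ /= distrC ger0_norm ?subr_ge0 //; lra.
Qed.

Lemma kl2r_le_Dstar v : 0 < v -> 1 / 2 < b < 1 -> v / 2 < 2 * b - 1 ->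
  ((kl2r (b - v / 2) b)%:E <= Dstar mu v q)%E.
Proof.
move=> v0 /andP[b2 b1] sb; set s := v / 2 in sb *; have s0 : 0 < s by rewrite divr_gt0.
apply: le_ereal_inf_tmp => _ [p [hp hv <-]].
have [hac|nac] := pselect (abs_cont mu p q); last by rewrite /KL asboolF // leey.
have [mp _ _] := hp; have [mq _ _] := hq.
have mS : measurable (scheffe_set p q) by exact: measurable_ltr_set.
have [x [pS /andP[_ x1]]] := prob_of_real hp mS.
have [y [qS _]] := prob_of_real hq mS.
have sxy : s <= x - y by move: hv; rewrite (Vdist_scheffe hp hq pS qS) lee_fin /s; lra.
have dual := kl2r_dual_le_KL hp hq hac mS pS qS.
have [yb|yb] := rangeQ_balance hq (ex_intro _ _ (conj mS qS)).
  (* The corner (b + s, b) may lie on the boundary b + s = 1, hence t < s. *)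
  apply: (@le_left_continuous _ (fun t => kl2r (b - t) b) _ _ s0).
    apply: continuous_kl2r; [apply: cvgB; [exact: cvg_cst|exact: cvg_id]|exact: cvg_cst| |].
    1,2: by apply/andP; split; lra.
  move=> t /andP[t0 ts].
  apply: le_trans (dual ((b + t) / b) ((1 - (b + t)) / (1 - b)) _ _); last 2 first.
  - by rewrite divr_gt0 //; lra.
  - by rewrite divr_gt0 //; lra.
  rewrite lee_fin (le_trans (kl2r_sub_le_add _ _)) //; first lra.
    by apply/andP; split; lra.
  by apply: kl2r_le_dual_above => //; try (apply/andP; split); lra.
rewrite -kl2rC; apply: le_trans
  (dual ((1 - (b - s)) / (1 - b)) ((1 - (1 - (b - s))) / (1 - (1 - b))) _ _); last 2 first.
- by rewrite divr_gt0 //; lra.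
- by rewrite divr_gt0 //; lra.
by rewrite lee_fin; apply: kl2r_le_dual_below; try (apply/andP; split); lra.
Qed.

Lemma Dstar_balance1 v : 0 < v -> b = 1 -> Dstar mu v q = +oo%E.
Proof.
move=> v0 b1; apply/eqP; rewrite eq_le leey /=.
apply: le_ereal_inf_tmp => _ [p [hp hv <-]].
have [hac|nac] := pselect (abs_cont mu p q); last by rewrite /KL asboolF.
exfalso; have [mp _ _] := hp; have [mq _ _] := hq.
have mS : measurable (scheffe_set p q) by exact: measurable_ltr_set.
have [x [pS /andP[_ x1]]] := prob_of_real hp mS.
have [y [qS /andP[y0 _]]] := prob_of_real hq mS.
have yx : y < x by move: hv; rewrite (Vdist_scheffe hp hq pS qS) lee_fin; lra.
have [yb|yb] := rangeQ_balance hq (ex_intro _ _ (conj mS qS)); rewrite b1 in yb; first lra.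
have : prob_of mu p (scheffe_set p q) = 0%E by apply: hac; rewrite // qS; congr EFin; lra.
by rewrite pS => -[x0]; lra.
Qed.
End Dstar_bounds.

Theorem theorem1 (d : measure_display) (T : measurableType d) (R : realType)
  (mu : {measure set T -> \bar R}) (Hmu : sigma_finite setT mu)
  (q : T -> R) (Hq : is_density mu q)
  (Hbeta : 1 / 2 < balance mu q)
  (v : R) (Hv0 : 0 < v) (Hv1 : v < 4 * (balance mu q - 1 / 2)) :
  Dstar mu v q = KL2 (balance mu q - v / 2) (balance mu q).
Proof.
have b1 := balance_le1 Hq; set b := balance mu q in Hbeta Hv1 b1 *.
have [b_1|bn1] := eqVneq b 1.
  by rewrite (Dstar_balance1 Hq Hv0 b_1) b_1 KL2_1 // gtrBl divr_gt0.
have {}b1 : b < 1 by rewrite lt_neqAle bn1 b1.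
rewrite KL2_kl2r; try by apply/andP; split; lra.
apply/le_anti/andP; split.
  by apply: Dstar_le_kl2r => //; apply/andP; split; lra.
by apply: kl2r_le_Dstar => //; [apply/andP; split | ]; lra.
Qed.
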